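(* There exist a function $g:\mathbb{N}\to\mathbb{R}$ with $g(n)=o(n)$ and, for every $n\ge 1$, an injective map from the set of Left-Leaning AVL trees with $n$ nodes to the set of finite binary strings such that every codeword has length at most $0.5912\,n+g(n)$. In words: there is an encoding of Left-Leaning AVL trees using at most $0.5912n+o(n)$ bits for Left-Leaning AVL trees with $n$ nodes.
   Context: A binary tree is a rooted tree in which every node has an (optional) left child and an (optional) right child. The height of a tree is the number of edges on a longest path from the root to a leaf; the empty tree has height $-1$. An AVL tree is a binary tree such that at every node the heights of the left and right subtrees differ by at most $1$ (empty subtrees included). A Left-Leaning AVL tree is an AVL tree in which, at every node, the height of the left subtree is at least the height of the right subtree. *)

From Stdlib Require Import Reals ZArith List.

Inductive tree : Type :=
| Leaf : tree
| Node : tree -> tree -> tree.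

Fixpoint nodes (t : tree) : nat :=
  match t with
  | Leaf => 0
  | Node l r => S (nodes l + nodes r)
  end.

Fixpoint height (t : tree) : Z :=
  match t with
  | Leaf => (-1)%Z
  | Node l r => (1 + Z.max (height l) (height r))%Z
  end.

Fixpoint is_AVL (t : tree) : Prop :=
  match t with
  | Leaf => True
  | Node l r => (Z.abs (height l - height r) <= 1)%Z /\ is_AVL l /\ is_AVL r
  end.

Fixpoint left_leaning (t : tree) : Prop :=
  match t with
  | Leaf => True
  | Node l r => (height r <= height l)%Z /\ left_leaning l /\ left_leaning r
  end.

Definition is_LLAVL (t : tree) : Prop := is_AVL t /\ left_leaning t.

Definition LLAVL_n (n : nat) : Type := { t : tree | is_LLAVL t /\ nodes t = n }.

Definition little_o_n (g : nat -> R) : Prop :=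
  forall eps : R, (0 < eps)%R ->
    exists N : nat, forall n : nat, (N <= n)%nat -> (Rabs (g n) <= eps * INR n)%R.

From Stdlib Require Import Reals List Lia Lra ProofIrrelevance.
Import ListNotations.
Open Scope R_scope.

(* Give a tree with n nodes the weight (2/3)^n.  A left-leaning AVL tree of
   height k+1 has a left subtree of height k and a right subtree of height k
   or k-1, so the total weight W_k of the left-leaning AVL trees of height
   k - 2 obeys W_(k+2) = 2/3 W_(k+1) (W_(k+1) + W_k).  Numerically W_9 and
   W_10 are below 3/8, and from then on the recurrence at least halves W_k,
   so the total weight of all left-leaning AVL trees is at most 6.  Hence
   there are at most 6 (3/2)^n of them with n nodes, and since
   (3/2)^17 <= 2^10 and 10/17 < 0.5912, the index of such a tree in an
   enumeration fits in 10 (n / 17) + 13 bits. *)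

Lemma partial_sum_le_of_halving (u : nat -> R) (K : nat) :
  (forall k, 0 <= u k) -> (forall m, (K <= m)%nat -> u (S m) <= u m / 2) ->
  forall m, sum_f_R0 u m <= sum_f_R0 u K + u K.
Proof.
  intros Hu Hhalf m.
  destruct (Nat.le_ge_cases m K) as [HmK|HKm].
  - assert (growing : Un_growing (sum_f_R0 u)).
    { intros k; rewrite tech5; pose proof (Hu (S k)); lra. }
    pose proof (growing_prop _ _ _ growing HmK); pose proof (Hu K); lra.
  - (* The quantity [sum_f_R0 u m + u m] does not increase beyond [K]. *)
    assert (tail : forall j, sum_f_R0 u (K + j)%nat + u (K + j)%nat <= sum_f_R0 u K + u K).
    { induction j as [|j IH]; [rewrite Nat.add_0_r; lra|].
      rewrite Nat.add_succ_r, tech5; pose proof (Hhalf (K + j)%nat ltac:(lia)); lra. }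
    replace m with (K + (m - K))%nat by lia.
    pose proof (tail (m - K)%nat); pose proof (Hu (K + (m - K))%nat); lra.
Qed.

Lemma little_o_n_const (c : R) : little_o_n (fun _ => c).
Proof.
  intros eps Heps; destruct (INR_unbounded (Rabs c / eps)) as [N HN].
  exists N; intros n Hn; apply le_INR in Hn.
  assert (Rabs c = eps * (Rabs c / eps)) by (field; lra).
  nra.
Qed.

Fixpoint nat_to_bits (b i : nat) : list bool :=
  match b with
  | O => []
  | S b' => Nat.odd i :: nat_to_bits b' (Nat.div2 i)
  end.

Lemma length_nat_to_bits (b i : nat) : length (nat_to_bits b i) = b.
Proof. revert i; induction b as [|b IH]; intros i; simpl; [|rewrite IH]; reflexivity. Qed.

Lemma nat_to_bits_inj (b i j : nat) :
  (i < 2 ^ b)%nat -> (j < 2 ^ b)%nat -> nat_to_bits b i = nat_to_bits b j -> i = j.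
Proof.
  revert i j; induction b as [|b IH]; simpl; intros i j Hi Hj E; [lia|].
  injection E as Hodd Hhalf.
  pose proof (Nat.div2_odd i); pose proof (Nat.div2_odd j).
  assert (Nat.div2 i = Nat.div2 j).
  { apply IH; [| |exact Hhalf]; destruct (Nat.odd i), (Nat.odd j); simpl in *; lia. }
  rewrite Hodd in *; lia.
Qed.

Section ListCode.

Variable A : Type.
Hypothesis A_eq_dec : forall a b : A, {a = b} + {a <> b}.

Fixpoint index_of (a : A) (l : list A) : nat :=
  match l with
  | [] => O
  | c :: l' => if A_eq_dec c a then O else S (index_of a l')
  end.

Lemma index_of_lt (a : A) (l : list A) : In a l -> (index_of a l < length l)%nat.
Proof.
  induction l as [|c l IH]; simpl; [tauto|].
  destruct (A_eq_dec c a); [lia|]; intros [->|H]; [congruence|specialize (IH H); lia].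
Qed.

Lemma index_of_inj (a1 a2 : A) (l : list A) :
  In a1 l -> In a2 l -> index_of a1 l = index_of a2 l -> a1 = a2.
Proof.
  induction l as [|c l IH]; simpl; [tauto|].
  destruct (A_eq_dec c a1), (A_eq_dec c a2); try congruence.
  intros [->|H1] [->|H2] E; congruence || auto.
Qed.

Lemma list_bool_code (l : list A) (b : nat) :
  (length l <= 2 ^ b)%nat ->
  exists code : A -> list bool,
    (forall a1 a2, In a1 l -> In a2 l -> code a1 = code a2 -> a1 = a2) /\
    (forall a, length (code a) = b).
Proof.
  intros Hl; exists (fun a => nat_to_bits b (index_of a l)); split.
  - intros a1 a2 H1 H2 E; apply (index_of_inj a1 a2 l H1 H2).
    pose proof (index_of_lt a1 l H1); pose proof (index_of_lt a2 l H2).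
    apply nat_to_bits_inj with b; [lia | lia | exact E].
  - intros a; apply length_nat_to_bits.
Qed.

End ListCode.

Section Weight.

Variable x : R.

Definition weight (l : list tree) : R :=
  fold_right (fun t s => x ^ nodes t + s) 0 l.

Lemma weight_app (l1 l2 : list tree) :
  weight (l1 ++ l2) = weight l1 + weight l2.
Proof. induction l1 as [|t l1 IH]; simpl; [lra | unfold weight in *; lra]. Qed.

Lemma weight_map_Node (l : tree) (rs : list tree) :
  weight (map (Node l) rs) = x * x ^ nodes l * weight rs.
Proof.
  induction rs as [|r rs IH]; unfold weight in *; simpl; [ring|].
  rewrite IH, pow_add; ring.
Qed.

Lemma weight_flat_map_Node (ls rs : list tree) :
  weight (flat_map (fun l => map (Node l) rs) ls) = x * weight ls * weight rs.
Proof.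
  induction ls as [|l ls IH]; simpl; [unfold weight; simpl; ring|].
  rewrite weight_app, weight_map_Node, IH; unfold weight; simpl; ring.
Qed.

Lemma weight_nonneg (l : list tree) : 0 <= x -> 0 <= weight l.
Proof.
  intros Hx; induction l as [|t l IH]; unfold weight in *; simpl; [lra|].
  pose proof (pow_le x (nodes t) Hx); lra.
Qed.

Lemma count_nodes_weight_le (n : nat) (l : list tree) :
  0 <= x ->
  INR (length (filter (fun t => Nat.eqb (nodes t) n) l)) * x ^ n <= weight l.
Proof.
  intros Hx; induction l as [|t l IH]; unfold weight in *; simpl; [lra|].
  pose proof (pow_le x (nodes t) Hx).
  destruct (Nat.eqb_spec (nodes t) n) as [<-|_]; simpl length; [rewrite S_INR|]; lra.
Qed.

End Weight.

(* [llavl k] lists the left-leaning AVL trees of height k - 2. *)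
Fixpoint llavl (k : nat) : list tree :=
  match k with
  | O => []
  | S O => [Leaf]
  | S ((S k') as k1) => flat_map (fun l => map (Node l) (llavl k1 ++ llavl k')) (llavl k1)
  end.

Lemma llavl_SS (k : nat) :
  llavl (S (S k)) = flat_map (fun l => map (Node l) (llavl (S k) ++ llavl k)) (llavl (S k)).
Proof. reflexivity. Qed.

Lemma height_ge_neg1 (t : tree) : (-1 <= height t)%Z.
Proof. induction t as [|l IHl r IHr]; cbn [height]; lia. Qed.

Lemma height_lt_nodes (t : tree) : (height t < Z.of_nat (nodes t))%Z.
Proof. induction t as [|l IHl r IHr]; cbn [nodes height]; lia. Qed.

Lemma In_llavl (t : tree) : is_LLAVL t -> In t (llavl (Z.to_nat (height t + 2))).
Proof.
  induction t as [|l IHl r IHr]; [intros; now left|].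
  intros [[Hbal [Al Ar]] [Hlean [Ll Lr]]].
  specialize (IHl (conj Al Ll)); specialize (IHr (conj Ar Lr)).
  pose proof (height_ge_neg1 l).
  cbn [height].
  replace (Z.to_nat (1 + Z.max (height l) (height r) + 2))
    with (S (S (Z.to_nat (height l + 1)))) by lia.
  rewrite llavl_SS; apply in_flat_map; exists l; split.
  - replace (S (Z.to_nat (height l + 1))) with (Z.to_nat (height l + 2)) by lia.
    exact IHl.
  - apply in_map, in_app_iff.
    destruct (Z.eq_dec (height r) (height l)) as [E|E].
    + left; replace (S (Z.to_nat (height l + 1))) with (Z.to_nat (height r + 2)) by lia.
      exact IHr.
    + right; replace (Z.to_nat (height l + 1)) with (Z.to_nat (height r + 2)) by lia.
      exact IHr.
Qed.

Definition rank_weight (k : nat) : R := weight (2/3) (llavl k).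

Lemma rank_weight_SS (k : nat) :
  rank_weight (S (S k)) = 2/3 * rank_weight (S k) * (rank_weight (S k) + rank_weight k).
Proof. unfold rank_weight; rewrite llavl_SS, weight_flat_map_Node, weight_app; ring. Qed.

Lemma rank_weight_nonneg (k : nat) : 0 <= rank_weight k.
Proof. apply weight_nonneg; lra. Qed.

Lemma rank_weight_SS_le (k : nat) (a b c : R) :
  rank_weight (S k) <= a -> rank_weight k <= b -> 2/3 * a * (a + b) <= c ->
  rank_weight (S (S k)) <= c.
Proof.
  intros Ha Hb Hc; rewrite rank_weight_SS.
  pose proof (rank_weight_nonneg k); pose proof (rank_weight_nonneg (S k)).
  apply Rle_trans with (2 := Hc), Rmult_le_compat; nra.
Qed.

Lemma rank_weight_upto_10 :
  rank_weight 9 <= 3/8 /\ rank_weight 10 <= 3/8 /\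
  sum_f_R0 rank_weight 10 + rank_weight 10 <= 6.
Proof.
  assert (w0 : rank_weight 0 <= 0) by (apply Req_le; reflexivity).
  assert (w1 : rank_weight 1 <= 1) by (apply Req_le; cbn; ring).
  assert (w2 : rank_weight 2 <= 2/3) by (apply (rank_weight_SS_le _ _ _ _ w1 w0); lra).
  assert (w3 : rank_weight 3 <= 463/625) by (apply (rank_weight_SS_le _ _ _ _ w2 w1); lra).
  assert (w4 : rank_weight 4 <= 869/1250) by (apply (rank_weight_SS_le _ _ _ _ w3 w2); lra).
  assert (w5 : rank_weight 5 <= 416/625) by (apply (rank_weight_SS_le _ _ _ _ w4 w3); lra).
  assert (w6 : rank_weight 6 <= 6039/10000) by (apply (rank_weight_SS_le _ _ _ _ w5 w4); lra).
  assert (w7 : rank_weight 7 <= 639/1250) by (apply (rank_weight_SS_le _ _ _ _ w6 w5); lra).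
  assert (w8 : rank_weight 8 <= 3801/10000) by (apply (rank_weight_SS_le _ _ _ _ w7 w6); lra).
  assert (w9 : rank_weight 9 <= 2259/10000) by (apply (rank_weight_SS_le _ _ _ _ w8 w7); lra).
  assert (w10 : rank_weight 10 <= 913/10000) by (apply (rank_weight_SS_le _ _ _ _ w9 w8); lra).
  simpl sum_f_R0; lra.
Qed.

Lemma rank_weight_le_3_8 (k : nat) :
  (9 <= k)%nat -> rank_weight k <= 3/8 /\ rank_weight (S k) <= 3/8.
Proof.
  intros Hk; induction Hk as [|k Hk [Hk_le HSk_le]].
  - destruct rank_weight_upto_10 as [H9 [H10 _]]; split; assumption.
  - split; [exact HSk_le|]; apply (rank_weight_SS_le _ _ _ _ HSk_le Hk_le); lra.
Qed.

Lemma rank_weight_halves (m : nat) : (10 <= m)%nat -> rank_weight (S m) <= rank_weight m / 2.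
Proof.
  intros Hm; destruct m as [|k]; [lia|].
  destruct (rank_weight_le_3_8 k ltac:(lia)) as [Hk HSk].
  rewrite rank_weight_SS.
  pose proof (rank_weight_nonneg k); pose proof (rank_weight_nonneg (S k)); nra.
Qed.

Lemma weight_llavl_upto (m : nat) :
  weight (2/3) (flat_map llavl (seq 0 (S m))) = sum_f_R0 rank_weight m.
Proof.
  induction m as [|m IH].
  - reflexivity.
  - rewrite seq_S, flat_map_app, weight_app, IH; cbn [flat_map]; rewrite app_nil_r.
    reflexivity.
Qed.

Lemma weight_llavl_upto_le (m : nat) : weight (2/3) (flat_map llavl (seq 0 (S m))) <= 6.
Proof.
  rewrite weight_llavl_upto.
  apply Rle_trans with (1 := partial_sum_le_of_halving _ _ rank_weight_nonneg rank_weight_halves m).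
  apply (proj2 (proj2 rank_weight_upto_10)).
Qed.

Definition llavl_with_nodes (n : nat) : list tree :=
  filter (fun t => Nat.eqb (nodes t) n) (flat_map llavl (seq 0 (S (S n)))).

Lemma In_llavl_with_nodes (t : tree) : is_LLAVL t -> In t (llavl_with_nodes (nodes t)).
Proof.
  intros Ht; apply filter_In; split; [|apply Nat.eqb_refl].
  apply in_flat_map; exists (Z.to_nat (height t + 2)); split; [|now apply In_llavl].
  apply in_seq; pose proof (height_lt_nodes t); pose proof (height_ge_neg1 t); lia.
Qed.

Lemma length_llavl_with_nodes (n : nat) : INR (length (llavl_with_nodes n)) <= 6 * (3/2) ^ n.
Proof.
  pose proof (count_nodes_weight_le (2/3) n (flat_map llavl (seq 0 (S (S n)))))
    as Hcount.
  pose proof (weight_llavl_upto_le (S n)) as Hweight.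
  assert (Hinv : (2/3) ^ n * (3/2) ^ n = 1).
  { rewrite <- Rpow_mult_distr; replace (2/3 * (3/2)) with 1 by field; apply pow1. }
  pose proof (pow_lt (3/2) n ltac:(lra)).
  fold (llavl_with_nodes n) in Hcount; specialize (Hcount ltac:(lra)); nra.
Qed.

Definition code_length (n : nat) : nat := 10 * (n / 17) + 13.

Lemma six_mul_pow_le_code_length (n : nat) : 6 * (3/2) ^ n <= 2 ^ code_length n.
Proof.
  unfold code_length.
  pose proof (Nat.div_mod_eq n 17) as Hn; pose proof (Nat.mod_upper_bound n 17 ltac:(lia)).
  set (q := (n / 17)%nat) in *; set (r := (n mod 17)%nat) in *.
  rewrite Hn, !pow_add, !pow_mult.
  assert (Hq : ((3/2) ^ 17) ^ q <= (2 ^ 10) ^ q).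
  { apply pow_incr; split; [apply pow_le |]; simpl; lra. }
  assert (Hr : (3/2) ^ r <= 2 ^ 10).
  { apply Rle_trans with ((3/2) ^ 16); [apply Rle_pow; [lra | lia] | simpl; lra]. }
  pose proof (pow_le ((3/2) ^ 17) q ltac:(apply pow_le; lra)).
  pose proof (pow_le (3/2) r ltac:(lra)).
  replace (2 ^ 13) with (2 ^ 10 * 8) by (simpl; ring).
  nra.
Qed.

Lemma code_length_le (n : nat) : INR (code_length n) <= 5912 / 10000 * INR n + 13.
Proof.
  unfold code_length; rewrite plus_INR, mult_INR.
  pose proof (Nat.Div0.mul_div_le n 17) as Hq; apply le_INR in Hq; rewrite mult_INR in Hq.
  pose proof (pos_INR (n / 17)); simpl INR in *; lra.
Qed.

Definition tree_eq_dec : forall a b : tree, {a = b} + {a <> b}.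
Proof. decide equality. Defined.

Theorem corollary1 :
  exists g : nat -> R,
    little_o_n g /\
    forall n : nat, (1 <= n)%nat ->
      exists enc : LLAVL_n n -> list bool,
        (forall t1 t2 : LLAVL_n n, enc t1 = enc t2 -> t1 = t2) /\
        (forall t : LLAVL_n n,
           (INR (length (enc t)) <= 5912 / 10000 * INR n + g n)%R).
Proof.
  exists (fun _ => 13); split; [apply little_o_n_const|].
  intros n _.
  destruct (list_bool_code _ tree_eq_dec (llavl_with_nodes n) (code_length n))
    as [code [code_inj code_len]].
  { apply INR_le; rewrite pow_INR; simpl (INR 2).
    apply Rle_trans with (1 := length_llavl_with_nodes n), six_mul_pow_le_code_length. }
  exists (fun t => code (proj1_sig t)); split.
  - intros [t1 [L1 N1]] [t2 [L2 N2]] E; apply subset_eq_compat; subst n.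
    apply code_inj; [| rewrite <- N2 |]; [apply In_llavl_with_nodes.. | exact E]; assumption.
  - intros t; rewrite code_len; apply code_length_le.
Qed.
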